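(* For every integer $n\ge 0$, \[ \sum_{j=0}^{n} \frac{q^{2j}(q;q)_{n+j}}{(q^2;q^2)_j}=(q;q^2)_{n+1}+q^{n+1}(q^2;q^2)_n . \]
   Context: $(a;q)_0:=1$ and $(a;q)_n:=(1-a)(1-aq)\cdots(1-aq^{n-1})$ for $n\ge1$. *)

From mathcomp Require Import all_boot all_algebra.
Set Implicit Arguments. Unset Strict Implicit. Unset Printing Implicit Defensive.
Import GRing.Theory.
Local Open Scope ring_scope.

Definition qpoch {R : comRingType} (a q : R) (n : nat) : R :=
  \prod_(i < n) (1 - a * q ^+ i).

From mathcomp Require Import all_boot all_algebra.
From mathcomp Require Import ring.
Set Implicit Arguments. Unset Strict Implicit. Unset Printing Implicit Defensive.
Import GRing.Theory.
Local Open Scope ring_scope.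

(* Put T_n(j) = (q;q)_(n+j) / (q^2;q^2)_j, S_n(m) = sum_(j<=m) q^j T_n(j) and
   U_n(m) = sum_(j<=m) q^(2j) T_n(j).  The summands of U_n(m) - q^(n+1) S_n(m)
   telescope to (q;q)_(n+m+1) / (q^2;q^2)_m, while splitting off the last factor
   of (q;q)_(n+1+j) gives S_(n+1)(m) = S_n(m) - q^(n+1) U_n(m).  Combining the two
   yields S_n(n) = (q^2;q^2)_n by induction on n, and the theorem is the value of
   U_n(n), using (q;q)_(2n+1) = (q;q^2)_(n+1) (q^2;q^2)_n. *)

Lemma qpochS (R : comNzRingType) (a q : R) n :
  qpoch a q n.+1 = qpoch a q n * (1 - a * q ^+ n).
Proof. by rewrite /qpoch big_ord_recr. Qed.

Lemma qpoch0 (R : comNzRingType) (a q : R) : qpoch a q 0 = 1.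
Proof. by rewrite /qpoch big_ord0. Qed.

Lemma qpoch_geomS (R : comNzRingType) (q : R) n :
  qpoch q q n.+1 = qpoch q q n * (1 - q ^+ n.+1).
Proof. by rewrite qpochS exprS. Qed.

Lemma qpoch_neq0_le (R : comNzRingType) (a q : R) m n :
  (m <= n)%N -> qpoch a q n != 0 -> qpoch a q m != 0.
Proof.
elim: n => [|n IHn]; first by rewrite leqn0 => /eqP->.
rewrite leq_eqVlt => /predU1P[-> //|lt_mn] nz_n1; apply: IHn => //.
by apply: contraNneq nz_n1; rewrite qpochS => ->; rewrite mul0r.
Qed.

Lemma qpoch_geom_divS (F : fieldType) (q x : F) m :
  qpoch q q m.+1 != 0 -> x * (1 - q ^+ m.+1) / qpoch q q m.+1 = x / qpoch q q m.
Proof.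
rewrite qpoch_geomS mulf_eq0 negb_or => /andP[nz_m nz_f].
by rewrite invfM mulrA mulrAC mulfK.
Qed.

Lemma qpoch_odd (R : comNzRingType) (a q : R) N :
  qpoch a q (2 * N).+1 = qpoch a (q ^+ 2) N.+1 * qpoch (a * q) (q ^+ 2) N.
Proof.
elim: N => [|N IHN]; first by rewrite muln0 qpochS [qpoch a _ 1]qpochS !qpoch0 !expr0 !mulr1.
have -> : (2 * N.+1).+1 = (2 * N).+3 by rewrite mulnS.
rewrite 2!qpochS IHN [qpoch a _ N.+2]qpochS [qpoch (a * q) _ N.+1]qpochS.
rewrite -!exprM mulnS !exprS.
ring.
Qed.

Section QSums.
Variables (F : fieldType) (q : F).

Definition qterm n j := qpoch q q (n + j) / qpoch (q ^+ 2) (q ^+ 2) j.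

Lemma sum_sq_qterm n m : qpoch (q ^+ 2) (q ^+ 2) m != 0 ->
  \sum_(0 <= j < m.+1) (q ^+ 2) ^+ j * qterm n j
  = q ^+ n.+1 * \sum_(0 <= j < m.+1) q ^+ j * qterm n j
    + qpoch q q (n + m).+1 / qpoch (q ^+ 2) (q ^+ 2) m.
Proof.
elim: m => [|m IHm] nz_m1.
  by rewrite !big_nat1 /qterm !addn0 qpoch0 qpoch_geomS !expr0 !divr1; ring.
have nz_m := qpoch_neq0_le (leqnSn m) nz_m1.
rewrite !(big_nat_recr _ _ _ (leq0n m.+1)) /= IHm // /qterm.
rewrite -[qpoch q q (n + m).+1 / _](qpoch_geom_divS _ nz_m1).
rewrite [qpoch q q (n + m.+1).+1]qpoch_geomS -[(n + m.+1).+1]addSn exprD addnS.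
ring.
Qed.

Lemma sum_qterm_succ n m :
  \sum_(0 <= j < m.+1) q ^+ j * qterm n.+1 j
  = \sum_(0 <= j < m.+1) q ^+ j * qterm n j
    - q ^+ n.+1 * \sum_(0 <= j < m.+1) (q ^+ 2) ^+ j * qterm n j.
Proof.
rewrite !mulr_sumr -sumrB; apply: eq_bigr => j _.
rewrite /qterm addSn qpoch_geomS -addSn exprD expr2 exprMn.
ring.
Qed.

Lemma sum_qterm_diag k : qpoch (q ^+ 2) (q ^+ 2) k != 0 ->
  \sum_(0 <= j < k.+1) q ^+ j * qterm k j = qpoch (q ^+ 2) (q ^+ 2) k.
Proof.
elim: k => [|k IHk] nz_k1.
  by rewrite big_nat1 /qterm !qpoch0 expr0 divr1 mul1r.
have nz_k := qpoch_neq0_le (leqnSn k) nz_k1.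
rewrite (big_nat_recr _ _ _ (leq0n k.+1)) /= sum_qterm_succ sum_sq_qterm // IHk //.
have -> : qterm k.+1 k.+1 = qpoch q q (k + k).+1 / qpoch (q ^+ 2) (q ^+ 2) k.
  by rewrite /qterm -(qpoch_geom_divS _ nz_k1) -exprM mul2n -addnn addSn addnS qpoch_geomS.
rewrite [qpoch _ _ k.+1]qpoch_geomS -exprM mulnC exprM; ring.
Qed.

End QSums.

Theorem lemma3p4 (F : fieldType) (q : F) (n : nat)
  (hq : forall j : nat, (j <= n)%N -> qpoch (q ^+ 2) (q ^+ 2) j != 0) :
  \sum_(0 <= j < n.+1) q ^+ (2 * j) * qpoch q q (n + j) / qpoch (q ^+ 2) (q ^+ 2) j
  = qpoch q (q ^+ 2) n.+1 + q ^+ n.+1 * qpoch (q ^+ 2) (q ^+ 2) n.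
Proof.
have nz_n := hq n (leqnn n).
under eq_bigr do rewrite exprM -mulrA -/(qterm q n _).
rewrite sum_sq_qterm // sum_qterm_diag // addnn -mul2n qpoch_odd -expr2 mulfK //.
by rewrite addrC.
Qed.
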